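(* Let $(x,y)$ be an $\mathbf{x}$-vertex of $S$ and let $x'$ be a vertex of $P_A$ adjacent to $x$ in $P_A$. Then there exists $y^*$ with $\operatorname{supp}(y^* )\subseteq\operatorname{supp}(y)$ such that $(x',y^* )$ is a vertex of $S$ adjacent to $(x,y)$ if and only if $(a_1x',a_2x')\in\operatorname{Band}_{\mathbf{x}}(y)$.
   Context: Let $A\in\mathbb{R}^{m_1\times n_1}$, $a_1,a_2\in\mathbb{R}^{1\times n_1}$, $b_1,b_2\in\mathbb{R}^{1\times n_2}$, $B\in\mathbb{R}^{m_2\times n_2}$, $c_A\in\mathbb{R}^{m_1}$, $c_B\in\mathbb{R}^{m_2}$, and scalars $c_a^1,c_a^2,c_b^1,c_b^2$. Consider the ($3$-sum) polyhedron $S=\{(x,y)\in\mathbb{R}^{n_1}\times\mathbb{R}^{n_2}: Ax=c_A,\ a_1x+b_1y=c_a^1+c_b^1,\ a_2x+b_2y=c_a^2+c_b^2,\ By=c_B,\ x,y\ge 0\}$, assumed simple (nondegenerate). Let $P_A=\{x: Ax=c_A, x\ge 0\}$. A vertex $(x,y)$ of $S$ is an $\mathbf{x}$-vertex if $x$ is a vertex of $P_A$. For such a vertex, $\operatorname{Band}_{\mathbf{x}}(y):=\{(c_a^1+c_b^1-b_1z,\ c_a^2+c_b^2-b_2z) : Bz=c_B,\ \operatorname{supp}(z)\subseteq\operatorname{supp}(y),\ z\ge 0\}\subseteq\mathbb{R}^2$, where $\operatorname{supp}$ denotes the set of indices of nonzero coordinates. *)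

From HB Require Import structures.
From mathcomp Require Import all_boot all_order all_algebra.
Set Implicit Arguments. Unset Strict Implicit. Unset Printing Implicit Defensive.
Import Order.TTheory GRing.Theory Num.Theory.
Local Open Scope ring_scope.

Section Poly.
Variable R : realFieldType.

Definition supp n (v : 'cV[R]_n) : {set 'I_n} := [set i | v i 0 != 0].

Definition nonneg n (v : 'cV[R]_n) : Prop := forall i, 0 <= v i 0.

Definition seg n (u v : 'cV[R]_n) (p : 'cV[R]_n) : Prop :=
  exists t : R, 0 <= t <= 1 /\ p = t *: u + (1 - t) *: v.

Definition is_vertex n (P : 'cV[R]_n -> Prop) (x : 'cV[R]_n) : Prop :=
  P x /\ forall y z (t : R), P y -> P z -> 0 < t < 1 ->
    x = t *: y + (1 - t) *: z -> y = z.

(* adjacency: two distinct vertices whose segment is a face (extreme subset) of P *)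
Definition adjacent n (P : 'cV[R]_n -> Prop) (u v : 'cV[R]_n) : Prop :=
  [/\ is_vertex P u, is_vertex P v, u <> v &
    forall p q (t : R), P p -> P q -> 0 < t < 1 ->
      seg u v (t *: p + (1 - t) *: q) -> seg u v p /\ seg u v q].

Definition PA m1 n1 (A : 'M[R]_(m1, n1)) (cA : 'cV[R]_m1) (x : 'cV[R]_n1) : Prop :=
  A *m x = cA /\ nonneg x.

Definition Mat3 m1 n1 m2 n2 (A : 'M[R]_(m1, n1)) (a1 a2 : 'rV[R]_n1)
  (b1 b2 : 'rV[R]_n2) (B : 'M[R]_(m2, n2)) : 'M[R]_(m1 + (1 + (1 + m2)), n1 + n2) :=
  col_mx (row_mx A 0) (col_mx (row_mx a1 b1) (col_mx (row_mx a2 b2) (row_mx 0 B))).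

(* the 3-sum polyhedron S, as a set of points col_mx x y in R^(n1+n2) *)
Definition S3 m1 n1 m2 n2 (A : 'M[R]_(m1, n1)) (a1 a2 : 'rV[R]_n1)
  (b1 b2 : 'rV[R]_n2) (B : 'M[R]_(m2, n2)) (cA : 'cV[R]_m1) (cB : 'cV[R]_m2)
  (ca1 ca2 cb1 cb2 : R) (v : 'cV[R]_(n1 + n2)) : Prop :=
  let x := usubmx v in let y := dsubmx v in
  [/\ A *m x = cA,
      a1 *m x + b1 *m y = (ca1 + cb1)%:M,
      a2 *m x + b2 *m y = (ca2 + cb2)%:M,
      B *m y = cB & nonneg v].

Definition std_nondegenerate m n (M : 'M[R]_(m, n)) (P : 'cV[R]_n -> Prop) : Prop :=
  forall v, is_vertex P v -> #|supp v| = \rank M.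

Definition is_xvertex m1 n1 n2 (S : 'cV[R]_(n1 + n2) -> Prop)
  (A : 'M[R]_(m1, n1)) (cA : 'cV[R]_m1) (x : 'cV[R]_n1) (y : 'cV[R]_n2) : Prop :=
  is_vertex S (col_mx x y) /\ is_vertex (PA A cA) x.

Definition Band m2 n2 (b1 b2 : 'rV[R]_n2) (B : 'M[R]_(m2, n2)) (cB : 'cV[R]_m2)
  (ca1 ca2 cb1 cb2 : R) (y : 'cV[R]_n2) (p : R * R) : Prop :=
  exists z : 'cV[R]_n2,
    [/\ B *m z = cB, supp z \subset supp y, nonneg z &
        p = (ca1 + cb1 - (b1 *m z) 0 0, ca2 + cb2 - (b2 *m z) 0 0)].

End Poly.

(* A vertex [(x, y)] of [S] pins down its [y]-part among the points of [S] whose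
   [y]-support lies in [supp y]: the difference [d] of two such [y]-parts over the
   same [x'] is in the kernel of [b1], [b2] and [B] and supported in [supp y], so
   [(x, y +- e d)] lie in [S] for a small [e > 0] and force [d = 0].  Hence a point
   [(x', z)] of [S] with [supp z] inside [supp y] inherits from [x'] the vertex
   property and from the edge [[x, x']] of [P_A] the face property of
   [[(x, y), (x', z)]]; the Band condition says exactly that such a [z] exists. *)

From mathcomp Require Import all_boot all_order all_algebra ring lra.

Set Implicit Arguments. Unset Strict Implicit. Unset Printing Implicit Defensive.
Import Order.TTheory GRing.Theory Num.Theory.
Local Open Scope ring_scope.

Section Support.
Variable R : realFieldType.

Lemma forall_col_mx n1 n2 (P : 'cV[R]_(n1 + n2) -> Prop) :
  (forall x y, P (col_mx x y)) -> forall v, P v.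
Proof. by move=> H v; rewrite -[v]vsubmxK. Qed.

Lemma nonneg_col_mx n1 n2 (x : 'cV[R]_n1) (y : 'cV[R]_n2) :
  nonneg (col_mx x y) <-> nonneg x /\ nonneg y.
Proof.
split=> [H | [Hx Hy] i].
- by split=> i; [have := H (lshift n2 i) | have := H (rshift n1 i)];
     rewrite ?col_mxEu ?col_mxEd.
- by case: (split_ordP i) => k ->; rewrite ?col_mxEu ?col_mxEd.
Qed.

Lemma supp_scale_add_sub n (X : {set 'I_n}) (a b : R) (p q : 'cV[R]_n) :
  supp p \subset X -> supp q \subset X -> supp (a *: p + b *: q) \subset X.
Proof.
move=> sp sq; apply/subsetP=> i; rewrite inE !mxE; apply: contraR => iX.
have v0 (v : 'cV[R]_n) : supp v \subset X -> v i 0 = 0.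
  by move/subsetP/(_ i)/contra/(_ iX); rewrite inE negbK => /eqP.
by rewrite (v0 p) // (v0 q) // !mulr0 addr0.
Qed.

Lemma supp_convl n (p q : 'cV[R]_n) (t : R) :
  nonneg p -> nonneg q -> 0 < t < 1 ->
  supp p \subset supp (t *: p + (1 - t) *: q).
Proof.
move=> Hp Hq /andP[t0 t1]; apply/subsetP=> i; rewrite !inE !mxE.
have pt : 0 <= t * p i 0 := mulr_ge0 (ltW t0) (Hp i).
have qt : 0 <= (1 - t) * q i 0 by rewrite mulr_ge0 // subr_ge0 ltW.
by apply: contra; rewrite paddr_eq0 // mulf_eq0 gt_eqF //= => /andP[].
Qed.

Lemma supp_convr n (p q : 'cV[R]_n) (t : R) :
  nonneg p -> nonneg q -> 0 < t < 1 ->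
  supp q \subset supp (t *: p + (1 - t) *: q).
Proof.
move=> Hp Hq /andP[t0 t1].
have -> : t *: p + (1 - t) *: q = (1 - t) *: q + (1 - (1 - t)) *: p.
  by rewrite addrC opprB addrCA subrr addr0.
by apply: supp_convl => //; apply/andP; split; lra.
Qed.

Lemma nonneg_perturb n (y d : 'cV[R]_n) :
  nonneg y -> supp d \subset supp y ->
  exists2 e : R, 0 < e & nonneg (y + e *: d) /\ nonneg (y - e *: d).
Proof.
move=> Hy Hs; set M := \sum_(i < n) `|d i 0| / y i 0.
have M0 : 0 <= M by apply: sumr_ge0 => i _; rewrite divr_ge0.
have M1 : 0 < 1 + M by lra.
suff He : forall i, (1 + M)^-1 * `|d i 0| <= y i 0.
  have e0 : 0 < (1 + M)^-1 by rewrite invr_gt0.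
  exists (1 + M)^-1 => //; split=> i; rewrite !mxE; have := He i;
  have := ler_norm (d i 0); have := ler_norm (- d i 0); rewrite normrN; nra.
move=> i; have [->|dn0] := eqVneq (d i 0) 0; first by rewrite normr0 mulr0.
have yp : 0 < y i 0.
  by rewrite lt_def Hy andbT; move/subsetP: Hs => /(_ i); rewrite !inE; apply.
have hM : `|d i 0| / y i 0 <= M.
  by rewrite /M (bigD1 i) //= lerDl; apply: sumr_ge0 => j _; rewrite divr_ge0.
rewrite ler_pdivrMl // mulrDl mul1r; rewrite ler_pdivrMr // in hM.
by apply: (le_trans hM); rewrite lerDr ltW.
Qed.

Lemma mx11_add_scalarE (u v : 'M[R]_1) (c : R) :
  u + v = c%:M <-> u 0 0 = c - v 0 0.
Proof.
split=> [/(congr1 (fun M : 'M_1 => M 0 0)) | E].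
  by rewrite !mxE /= mulr1n => <-; rewrite addrK.
by apply/matrixP=> i j; rewrite !ord1 !mxE /= mulr1n E subrK.
Qed.

Lemma is_vertex_dir_eq0 n (P : 'cV[R]_n -> Prop) (v d : 'cV[R]_n) :
  is_vertex P v -> P (v + d) -> P (v - d) -> d = 0.
Proof.
move=> [_ ext] Pp Pm.
have half : 0 < (2^-1 : R) < 1 by apply/andP; split; lra.
have E : v = 2^-1 *: (v + d) + (1 - 2^-1) *: (v - d).
  by apply/matrixP=> i j; rewrite !mxE; field.
have /matrixP Hd := ext _ _ _ Pp Pm half E.
by apply/matrixP=> i j; have := Hd i j; rewrite !mxE; lra.
Qed.

End Support.

Section ThreeSum.
Variables (R : realFieldType) (m1 n1 m2 n2 : nat).
Variables (A : 'M[R]_(m1, n1)) (a1 a2 : 'rV[R]_n1) (b1 b2 : 'rV[R]_n2).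
Variables (B : 'M[R]_(m2, n2)) (cA : 'cV[R]_m1) (cB : 'cV[R]_m2).
Variables (ca1 ca2 cb1 cb2 : R).

Local Notation S := (S3 A a1 a2 b1 b2 B cA cB ca1 ca2 cb1 cb2).

Lemma S3_col_mxE x y :
  S (col_mx x y) <->
  [/\ A *m x = cA, a1 *m x + b1 *m y = (ca1 + cb1)%:M,
      a2 *m x + b2 *m y = (ca2 + cb2)%:M, B *m y = cB & nonneg x /\ nonneg y].
Proof.
rewrite /S3 col_mxKu col_mxKd.
by split=> -[h1 h2 h3 h4 /nonneg_col_mx h5]; split.
Qed.

Lemma S3_conv x y x' y' (s : R) :
  S (col_mx x y) -> S (col_mx x' y') -> 0 <= s <= 1 ->
  S (col_mx (s *: x + (1 - s) *: x') (s *: y + (1 - s) *: y')).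
Proof.
move=> /S3_col_mxE[h1 h2 h3 h4 [h5 h6]] /S3_col_mxE[k1 k2 k3 k4 [k5 k6]].
move=> /andP[s0 s1]; have s1' : 0 <= 1 - s by rewrite subr_ge0.
have E k (c : 'M[R]_(k, 1)) : s *: c + (1 - s) *: c = c.
  by rewrite -scalerDl addrC subrK scale1r.
apply/S3_col_mxE; split.
- by rewrite mulmxDr -!scalemxAr h1 k1 E.
- by rewrite !mulmxDr -!scalemxAr addrACA -!scalerDr h2 k2 E.
- by rewrite !mulmxDr -!scalemxAr addrACA -!scalerDr h3 k3 E.
- by rewrite mulmxDr -!scalemxAr h4 k4 E.
- by split=> i; rewrite !mxE addr_ge0 ?mulr_ge0.
Qed.

Lemma vertex_ker_supp_eq0 x y d :
  is_vertex S (col_mx x y) -> supp d \subset supp y ->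
  b1 *m d = 0 -> b2 *m d = 0 -> B *m d = 0 -> d = 0.
Proof.
move=> V Hs hb1 hb2 hB; have /S3_col_mxE[h1 h2 h3 h4 [nx ny]] := V.1.
have [e e0 [Hp Hm]] := nonneg_perturb ny Hs.
have S_shift f : nonneg (y + f *: d) -> S (col_mx x (y + f *: d)).
  move=> Hf; apply/S3_col_mxE.
  by rewrite !mulmxDr -!scalemxAr hb1 hb2 hB !scaler0 !addr0.
have Ep : col_mx x y + col_mx 0 (e *: d) = col_mx x (y + e *: d).
  by rewrite add_col_mx addr0.
have Em : col_mx x y - col_mx 0 (e *: d) = col_mx x (y + (- e) *: d).
  by rewrite opp_col_mx add_col_mx oppr0 addr0 scaleNr.
rewrite -scaleNr in Hm.
have := is_vertex_dir_eq0 (d := col_mx 0 (e *: d)) V.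
rewrite Ep Em => /(_ (S_shift _ Hp) (S_shift _ Hm)).
by rewrite -col_mx0 => /eq_col_mx[_ /eqP]; rewrite scaler_eq0 gt_eqF //= => /eqP.
Qed.

Lemma vertex_supp_dsub_unique x y u p q :
  is_vertex S (col_mx x y) -> S (col_mx u p) -> S (col_mx u q) ->
  supp p \subset supp y -> supp q \subset supp y -> p = q.
Proof.
move=> V /S3_col_mxE[_ h2 h3 h4 _] /S3_col_mxE[_ k2 k3 k4 _] sp sq.
apply/eqP; rewrite -subr_eq0; apply/eqP; apply: (vertex_ker_supp_eq0 V).
- by rewrite -scaleN1r -[p]scale1r supp_scale_add_sub.
- by apply/eqP; rewrite mulmxBr subr_eq0 -(inj_eq (addrI (a1 *m u))) h2 k2.
- by apply/eqP; rewrite mulmxBr subr_eq0 -(inj_eq (addrI (a2 *m u))) h3 k3.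
- by rewrite mulmxBr h4 k4 subrr.
Qed.

Lemma S3_Band x' y z :
  S (col_mx x' z) -> supp z \subset supp y ->
  Band b1 b2 B cB ca1 ca2 cb1 cb2 y ((a1 *m x') 0 0, (a2 *m x') 0 0).
Proof.
move=> /S3_col_mxE[_ /mx11_add_scalarE h2 /mx11_add_scalarE h3 Bz [_ nz]] sz.
by exists z; rewrite h2 h3.
Qed.

Lemma Band_S3 x' y :
  PA A cA x' ->
  Band b1 b2 B cB ca1 ca2 cb1 cb2 y ((a1 *m x') 0 0, (a2 *m x') 0 0) ->
  exists2 z, supp z \subset supp y & S (col_mx x' z).
Proof.
move=> [Ax' nx'] [z [Bz sz nz [/mx11_add_scalarE h2 /mx11_add_scalarE h3]]].
by exists z => //; apply/S3_col_mxE.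
Qed.

Section Lift.
Variables (x x' : 'cV[R]_n1) (y z : 'cV[R]_n2).
Hypothesis (Vxy : is_vertex S (col_mx x y)) (Sx'z : S (col_mx x' z)).
Hypothesis szy : supp z \subset supp y.

Lemma vertex_lift : is_vertex (PA A cA) x' -> is_vertex S (col_mx x' z).
Proof.
move=> [_ ext]; split=> //; apply: forall_col_mx => px py; apply: forall_col_mx => qx qy t.
move=> Sp Sq t01; rewrite !scale_col_mx add_col_mx => /eq_col_mx[Ex Ey].
have /S3_col_mxE[p1 _ _ _ [pnx pny]] := Sp; have /S3_col_mxE[q1 _ _ _ [qnx qny]] := Sq.
have pqx : px = qx := ext px qx t (conj p1 pnx) (conj q1 qnx) t01 Ex.
rewrite -pqx in Sq *; congr col_mx; apply: (vertex_supp_dsub_unique Vxy Sp Sq).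
- by apply: subset_trans szy; rewrite Ey; apply: supp_convl.
- by apply: subset_trans szy; rewrite Ey; apply: supp_convr.
Qed.

Lemma seg_lift px py :
  S (col_mx px py) -> supp py \subset supp y -> seg x x' px ->
  seg (col_mx x y) (col_mx x' z) (col_mx px py).
Proof.
move=> Sp spy [s [s01 Epx]]; exists s; split=> //.
rewrite !scale_col_mx add_col_mx -Epx; congr col_mx.
apply: (vertex_supp_dsub_unique Vxy Sp) => //; last by rewrite supp_scale_add_sub.
by rewrite Epx; apply: S3_conv (Vxy.1) Sx'z s01.
Qed.

Lemma adjacent_lift : adjacent (PA A cA) x x' -> adjacent S (col_mx x y) (col_mx x' z).
Proof.
move=> [_ Vx' neq face]; split; [exact: Vxy | exact: vertex_lift Vx' | by case/eq_col_mx|].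
apply: forall_col_mx => px py; apply: forall_col_mx => qx qy t Sp Sq t01 [s [s01 E]].
move: E; rewrite !scale_col_mx !add_col_mx => /eq_col_mx[Ex Ey].
have /S3_col_mxE[p1 _ _ _ [pnx pny]] := Sp; have /S3_col_mxE[q1 _ _ _ [qnx qny]] := Sq.
have [sp sq] := face px qx t (conj p1 pnx) (conj q1 qnx) t01 (ex_intro _ s (conj s01 Ex)).
have sw : supp (s *: y + (1 - s) *: z) \subset supp y by rewrite supp_scale_add_sub.
split; apply: seg_lift => //; apply: subset_trans sw; rewrite -Ey.
- exact: supp_convl.
- exact: supp_convr.
Qed.

End Lift.

End ThreeSum.

Unset Implicit Arguments.

Theorem lemma6 (R : realFieldType) (m1 n1 m2 n2 : nat)
  (A : 'M[R]_(m1, n1)) (a1 a2 : 'rV[R]_n1) (b1 b2 : 'rV[R]_n2)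
  (B : 'M[R]_(m2, n2)) (cA : 'cV[R]_m1) (cB : 'cV[R]_m2) (ca1 ca2 cb1 cb2 : R)
  (Hsimple : std_nondegenerate (Mat3 A a1 a2 b1 b2 B)
               (S3 A a1 a2 b1 b2 B cA cB ca1 ca2 cb1 cb2))
  (x : 'cV[R]_n1) (y : 'cV[R]_n2)
  (Hxv : is_xvertex (S3 A a1 a2 b1 b2 B cA cB ca1 ca2 cb1 cb2) A cA x y)
  (x' : 'cV[R]_n1) (Hadj : adjacent (PA A cA) x x') :
  (exists ystar : 'cV[R]_n2,
      supp ystar \subset supp y /\
      adjacent (S3 A a1 a2 b1 b2 B cA cB ca1 ca2 cb1 cb2)
               (col_mx x y) (col_mx x' ystar))
  <-> Band b1 b2 B cB ca1 ca2 cb1 cb2 y ((a1 *m x') 0 0, (a2 *m x') 0 0).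
Proof.
have [Vxy _] := Hxv; have [_ [PAx' _] _ _] := Hadj.
split=> [[ystar [sys [_ [Sys _] _ _]]] | HBand].
- exact: S3_Band Sys sys.
- have [z szy Sz] := Band_S3 PAx' HBand.
  by exists z; split=> //; apply: adjacent_lift.
Qed.
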